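(* Let $(X,x)$ be a pointed diffeological space. Assume that there exists a local generating set $G$ of $X$ at $x$ with the property that for any $q:U\to X$ in $G$, if $f:V\to U$ is a smooth map from an open subset $V$ of some $\mathbb{R}^n$ such that $q\circ f$ is the constant map at $x$, then $f$ is locally constant. Then $T_x^{dvs}(X)$ is a fine diffeological vector space.
   Context: A diffeological space is a set with, for every open subset $U$ of every $\mathbb{R}^n$, a set of maps $U\to X$ called plots, containing constants, closed under precomposition with smooth maps, and satisfying the sheaf condition; smooth maps send plots to plots. Let $\mathcal{G}(X,x)$ be the category whose objects are plots $p:U\to X$ with $U$ a connected open neighbourhood of $0$ in some $\mathbb{R}^n$ and $p(0)=x$, with morphisms $p\to q$ ($q:V\to X$) the germs at $0$ of smooth maps $f$ from an open neighbourhood $W$ of $0$ in $U$ to $V$ with $f(0)=0$ and $p|_W=q\circ f$. A local generating set of $X$ at $x$ is a set $G$ of objects of $\mathcal{G}(X,x)$ such that every object admits a morphism to some element of $G$. The internal tangent space $T_x(X)$ is the colimit in real vector spaces of $p\mapsto T_0(U)$, $[f]\mapsto f_*$ over $\mathcal{G}(X,x)$; $TX=\coprod_xT_x(X)$. For a plot $f:U\to X$ with $U$ connected, $Tf:TU\to TX$ sends $T_u(U)$ into $T_{f(u)}(X)$ via $T_u(U)\cong T_0(U-u)\to T_{f(u)}(X)$ induced by $w\mapsto f(w+u)$. Hector's diffeology on $TX$ is generated by all such $Tf$. A diffeological vector space over $X$ is a smooth map $V\to X$ with vector space structures on fibres such that fibrewise addition, scalar multiplication and zero section are smooth. The dvs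 diffeology is the smallest diffeology on $TX$ containing Hector's diffeology making $TX\to X$ a diffeological vector space over $X$, and $T_x^{dvs}(X)$ is $T_x(X)$ with the sub-diffeology. A diffeological vector space is a vector space with a diffeology making addition and scalar multiplication smooth; the fine diffeology on a vector space is the smallest such diffeology, and a diffeological vector space is fine if it has this diffeology. *)

From mathcomp Require Import all_boot all_algebra all_classical all_reals all_analysis.
Import numFieldNormedType.Exports.
Import GRing.Theory.
Set Implicit Arguments. Unset Strict Implicit. Unset Printing Implicit Defensive.
Local Open Scope classical_set_scope.
Local Open Scope ring_scope.

Fixpoint iderive (R : realType) (m : nat) (W : normedModType R)
    (vs : seq 'rV[R]_m) (f : 'rV[R]_m -> W) : 'rV[R]_m -> W :=
  match vs with
  | [::] => f
  | v :: vs' => fun x => derive (iderive vs' f) x v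
  end.

Definition smooth_on (R : realType) (m : nat) (W : normedModType R)
    (V : set 'rV[R]_m) (f : 'rV[R]_m -> W) : Prop :=
  forall (vs : seq 'rV[R]_m) (x : 'rV[R]_m), V x -> differentiable (iderive vs f) x.

(* A (pre)diffeology on X: for every n and every subset U of R^n, a predicate
   on parametrizations U -> X (represented as total maps, only values on U matter). *)
Definition pdiff (R : realType) (X : Type) :=
  forall n : nat, set 'rV[R]_n -> ('rV[R]_n -> X) -> Prop.

Definition is_diffeology (R : realType) (X : Type) (D : pdiff R X) : Prop :=
  (forall n U p, D n U p -> open U) /\
  (forall n U (p q : 'rV[R]_n -> X), D n U p -> {in U, p =1 q} -> D n U q) /\
  (forall n (U : set 'rV[R]_n) (c : X), open U -> D n U (fun _ => c)) /\
  (forall n m (U : set 'rV[R]_n) (V : set 'rV[R]_m) p (f : 'rV[R]_m -> 'rV[R]_n),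
      D n U p -> open V -> smooth_on V f -> f @` V `<=` U -> D m V (p \o f)) /\
  (forall n (U : set 'rV[R]_n) p, open U ->
      (forall u, U u -> exists W : set 'rV[R]_n, [/\ open W, W u, W `<=` U & D n W p]) ->
      D n U p).

Record gobj (R : realType) (X : Type) := GObj {
  gdim : nat;
  gdom : set 'rV[R]_gdim;
  gmap : 'rV[R]_gdim -> X }.
Arguments gdim {R X} g.
Arguments gdom {R X} g.
Arguments gmap {R X} g.

Definition is_gobj (R : realType) (X : Type) (D : pdiff R X) (x : X) (o : gobj R X) :=
  [/\ open (gdom o), connected (gdom o), gdom o 0, D _ (gdom o) (gmap o) & gmap o 0 = x].

(* f (defined on the open neighbourhood W of 0 in U) represents a morphism p -> q *)
Definition is_ghom (R : realType) (X : Type) (p q : gobj R X)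
    (W : set 'rV[R]_(gdim p)) (f : 'rV[R]_(gdim p) -> 'rV[R]_(gdim q)) :=
  open W /\ W 0 /\ W `<=` gdom p /\ smooth_on W f /\
  f 0 = 0 /\ f @` W `<=` gdom q /\ (forall w, W w -> gmap p w = gmap q (f w)).
Arguments is_ghom {R X} p q W f.

Definition is_linear_map (R : realType) (U V : lmodType R) (h : U -> V) :=
  forall (a : R) (u v : U), h (a *: u + v) = a *: h u + h v.

(* kappa is a cocone (in real vector spaces) over the functor
   p |-> T_0(U) = R^n, [f] |-> f_* = Df(0) *)
Definition is_gcocone (R : realType) (X : Type) (D : pdiff R X) (x : X)
    (V : lmodType R) (kappa : forall o : gobj R X, 'rV[R]_(gdim o) -> V) :=
  (forall o, is_gobj D x o -> is_linear_map (kappa o)) /\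
  (forall p q W f, is_gobj D x p -> is_gobj D x q -> is_ghom p q W f ->
     forall v, kappa q ('D_v f 0) = kappa p v).

Definition is_internal_tangent (R : realType) (X : Type) (D : pdiff R X) (x : X)
    (V : lmodType R) (iota : forall o : gobj R X, 'rV[R]_(gdim o) -> V) :=
  is_gcocone D x iota /\
  forall (W : lmodType R) (kappa : forall o : gobj R X, 'rV[R]_(gdim o) -> W),
    is_gcocone D x kappa ->
    (exists h : V -> W, is_linear_map h /\
        forall o, is_gobj D x o -> forall v, h (iota o v) = kappa o v) /\
    (forall h1 h2 : V -> W, is_linear_map h1 -> is_linear_map h2 ->
        (forall o, is_gobj D x o -> forall v, h1 (iota o v) = kappa o v) ->
        (forall o, is_gobj D x o -> forall v, h2 (iota o v) = kappa o v) ->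
        h1 =1 h2).

Definition tbundle (R : realType) (X : Type) (T : X -> lmodType R) := {y : X & T y}.

(* fibrewise addition (only meaningful on the fibred product TX x_X TX) *)
Definition tadd (R : realType) (X : Type) (T : X -> lmodType R)
    (s t : tbundle T) : tbundle T :=
  match pselect (projT1 t = projT1 s) with
  | left e => existT T (projT1 s) (projT2 s + eq_rect _ T (projT2 t) _ e)
  | right _ => s
  end.

Definition tscale (R : realType) (X : Type) (T : X -> lmodType R)
    (r : R) (s : tbundle T) : tbundle T :=
  existT T (projT1 s) (r *: projT2 s).

Definition shift_obj (R : realType) (X : Type) (n : nat)
    (U : set 'rV[R]_n) (f : 'rV[R]_n -> X) (u : 'rV[R]_n) : gobj R X :=
  @GObj R X n [set w | U (w + u)] (fun w => f (w + u)).

Definition tmap (R : realType) (X : Type) (T : X -> lmodType R)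
    (iota : forall y : X, forall o : gobj R X, 'rV[R]_(gdim o) -> T y)
    (n : nat) (U : set 'rV[R]_n) (f : 'rV[R]_n -> X)
    (u v : 'rV[R]_n) : tbundle T :=
  existT T (f u) (iota (f u) (shift_obj U f u) v).

(* E contains Hector's diffeology, i.e. every Tf (f a plot on a connected U)
   is smooth from TU (with its standard diffeology) to (TX, E) *)
Definition contains_hector (R : realType) (X : Type) (D : pdiff R X)
    (T : X -> lmodType R)
    (iota : forall y : X, forall o : gobj R X, 'rV[R]_(gdim o) -> T y)
    (E : pdiff R (tbundle T)) : Prop :=
  forall n (U : set 'rV[R]_n) (f : 'rV[R]_n -> X),
    open U -> connected U -> D n U f ->
    forall k (V : set 'rV[R]_k) (a b : 'rV[R]_k -> 'rV[R]_n),
      open V -> smooth_on V a -> smooth_on V b -> a @` V `<=` U ->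
      E k V (fun w => tmap iota U f (a w) (b w)).

Definition is_dvs_over (R : realType) (X : Type) (D : pdiff R X)
    (T : X -> lmodType R) (E : pdiff R (tbundle T)) : Prop :=
  [/\ is_diffeology E,
      (forall n U P, E n U P -> D n U (fun u => projT1 (P u))),
      (* fibrewise addition smooth on TX x_X TX (subset of product diffeology) *)
      (forall n U P1 P2, E n U P1 -> E n U P2 ->
          (forall u, U u -> projT1 (P1 u) = projT1 (P2 u)) ->
          E n U (fun u => tadd (P1 u) (P2 u))),
      (forall n U (r : 'rV[R]_n -> R) P, smooth_on U r -> E n U P ->
          E n U (fun u => tscale (r u) (P u))) &
      (forall n U p, D n U p -> E n U (fun u => existT T (p u) 0))].

Definition dvs_plot (R : realType) (X : Type) (D : pdiff R X)
    (T : X -> lmodType R)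
    (iota : forall y : X, forall o : gobj R X, 'rV[R]_(gdim o) -> T y) :
    pdiff R (tbundle T) :=
  fun n U P => forall E : pdiff R (tbundle T),
    is_dvs_over D E -> contains_hector D iota E -> E n U P.

(* T_x^dvs(X): the fibre T_x(X) with the subset diffeology *)
Definition tdvs_plot (R : realType) (X : Type) (D : pdiff R X)
    (T : X -> lmodType R)
    (iota : forall y : X, forall o : gobj R X, 'rV[R]_(gdim o) -> T y)
    (x : X) : pdiff R (T x) :=
  fun n U Q => dvs_plot D iota U (fun u => existT T x (Q u)).

Definition is_vs_diffeology (R : realType) (V : lmodType R) (E : pdiff R V) : Prop :=
  [/\ is_diffeology E,
      (forall n U (P1 P2 : 'rV[R]_n -> V), E n U P1 -> E n U P2 ->
          E n U (fun u => P1 u + P2 u)) &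
      (forall n U (r : 'rV[R]_n -> R) (P : 'rV[R]_n -> V), smooth_on U r -> E n U P ->
          E n U (fun u => r u *: P u))].

Definition fine_plot (R : realType) (V : lmodType R) : pdiff R V :=
  fun n U Q => forall E : pdiff R V, is_vs_diffeology E -> E n U Q.

Definition is_fine (R : realType) (V : lmodType R) (E : pdiff R V) : Prop :=
  forall n U Q, E n U Q <-> @fine_plot R V n U Q.

Definition is_local_generating_set (R : realType) (X : Type) (D : pdiff R X) (x : X)
    (G : set (gobj R X)) : Prop :=
  (forall q, G q -> is_gobj D x q) /\
  (forall p, is_gobj D x p -> exists q, exists W f, G q /\ is_ghom p q W f).

Definition locally_constant_on (R : realType) (m : nat) (A : Type)
    (V : set 'rV[R]_m) (f : 'rV[R]_m -> A) : Prop :=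
  forall v, V v -> exists W : set 'rV[R]_m,
    [/\ open W, W v, W `<=` V & forall w, W w -> f w = f v].

(* Let E be the diffeology on TX whose plots P have open domain, a plot of X as projection,
   and are fibrewise fine: whenever P o g lands in the fibre over x for a smooth g, the
   T_x(X)-component of P o g is a plot of the fine diffeology. E makes TX -> X a
   diffeological vector space over X and contains Hector's diffeology, hence contains the
   dvs diffeology, so every plot of T_x^dvs(X) is fine. Conversely T_x^dvs(X) is a
   diffeological vector space, so it contains the fine diffeology.
   To see that Tf(a, b) is a plot of E, fix w0 and a morphism h from the germ of f at a(w0)
   to some q in G. For w near w0 with f(a w) = x, q o h o (a - a(w0)) is constant at x, so
   h o (a - a(w0)) is locally constant, hence 0, and u |-> h(u + a w - a w0) is a morphism
   from the germ of f at a(w) to q. The cocone property then writes Tf(a w, b w) as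
   iota_q (Dh(a w - a w0)(b w)), a combination of the fixed vectors iota_q(e_i) with
   smooth coefficients. *)

From HB Require Import structures.
From mathcomp Require Import all_boot all_order all_algebra all_classical all_reals all_analysis.
Import numFieldNormedType.Exports.
Import Order.TTheory GRing.Theory Num.Theory.
Local Open Scope classical_set_scope.
Local Open Scope ring_scope.

Section Smooth.
Context {R : realType}.

Lemma near0_differentiable (V W : normedModType R) (h : V -> W) (x : V) :
  (\forall y \near x, h y = 0) -> differentiable h x.
Proof.
move=> h0; have hx0 : h x = 0 by exact: nbhs_singleton h0.
have h_shift : h \o shift x = cst (h x) + \0 +o_ 0 id.
  apply/eqaddoP => e e0.
  have : \forall y \near (0 : V), h (y + x) = 0.
    by rewrite (near_shift x) /=; apply: filterS h0 => z hz /=; rewrite add0r subrK.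
  apply: filterS => y /= hy; rewrite !fctE hy hx0 addr0 subr0 normr0.
  by rewrite mulr_ge0 // ltW.
have dh0 : 'd h x = (\0 : {linear V -> W}) :> (V -> W).
  by apply: diff_unique => //; exact: cst_continuous.
by apply/diff_locallyP; rewrite dh0; split => //; exact: cst_continuous.
Qed.

Lemma near_eq_differentiable (V W : normedModType R) (f g : V -> W) (x : V) :
  (\forall y \near x, f y = g y) -> differentiable f x -> differentiable g x.
Proof.
move=> fg df; have -> : g = f + (g - f) by apply/funext => y; rewrite !fctE addrC subrK.
apply: differentiableD => //; apply: near0_differentiable.
by apply: filterS fg => y fgy; rewrite !fctE fgy subrr.
Qed.

Lemma open_near_eq {m} {A : Type} (V : set 'rV[R]_m) (f g : 'rV[R]_m -> A) x :
  open V -> (forall y, V y -> f y = g y) -> V x -> \forall y \near x, f y = g y.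
Proof. by move=> oV fg Vx; apply: filterS fg _; exact: open_nbhs_nbhs. Qed.

Definition Dv {m} {W : normedModType R} (v : 'rV[R]_m) (f : 'rV[R]_m -> W) :=
  fun y => 'D_v f y.

(* [smooth_on V f] is [Ck k V f] for every [k] (smooth_onP); the graded form lets the
   closure properties of smooth maps be proved by induction on [k]. *)
Fixpoint Ck {m} {W : normedModType R} (k : nat) (V : set 'rV[R]_m)
    (f : 'rV[R]_m -> W) : Prop :=
  match k with
  | 0 => forall x, V x -> differentiable f x
  | k'.+1 => (forall x, V x -> differentiable f x) /\ forall v, Ck k' V (Dv v f)
  end.

Section Ck.
Context {m : nat}.
Implicit Types (V : set 'rV[R]_m).

Lemma iderive_rcons {W : normedModType R} vs v (f : 'rV[R]_m -> W) :
  iderive (rcons vs v) f = iderive vs (Dv v f).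
Proof. by elim: vs => //= w vs ->. Qed.

Lemma CkP {W : normedModType R} k V (f : 'rV[R]_m -> W) :
  Ck k V f <-> forall vs, (size vs <= k)%N -> forall x, V x -> differentiable (iderive vs f) x.
Proof.
elim: k f => [|k IH] f /=.
  by split=> [fk [|//] _|fk x Vx]; [exact: fk|exact: (fk [::])].
split=> [[df dfk]|fk]; last first.
  split=> [|v]; first exact: (fk [::]).
  by apply/IH => vs vsk x Vx; rewrite -iderive_rcons; apply: fk; rewrite ?size_rcons.
case/lastP => [_|vs v]; first exact: df.
by rewrite size_rcons ltnS iderive_rcons; exact: (IH _).1 (dfk v) vs.
Qed.

Lemma smooth_onP {W : normedModType R} V (f : 'rV[R]_m -> W) :
  smooth_on V f <-> forall k, Ck k V f.
Proof.
split=> [fs k|fk vs]; first by apply/CkP => vs _; exact: fs.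
exact: (CkP _ _ _).1 (fk (size vs)) vs (leqnn _).
Qed.

Lemma CkS {W : normedModType R} k V (f : 'rV[R]_m -> W) : Ck k.+1 V f -> Ck k V f.
Proof. by move=> /CkP fk; apply/CkP => vs vsk; apply: fk; exact: leqW. Qed.

Lemma Ck_eq_on {W : normedModType R} {k V} {f g : 'rV[R]_m -> W} :
  open V -> (forall x, V x -> f x = g x) -> Ck k V f -> Ck k V g.
Proof.
move=> oV; elim: k f g => [|k IH] f g fg /=.
  by move=> df x Vx; apply: near_eq_differentiable (df x Vx); exact: open_near_eq fg Vx.
move=> [df dfk]; split=> [x Vx|v].
  by apply: near_eq_differentiable (df x Vx); exact: open_near_eq fg Vx.
apply: IH (dfk v) => x Vx; apply: near_eq_derive; exact: open_near_eq fg Vx.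
Qed.

Lemma Ck_cst {W : normedModType R} k V (c : W) : Ck k V (fun=> c).
Proof.
elim: k c => [|k IH] c /=; first by move=> *; exact: differentiable_cst.
split=> [*|v]; first exact: differentiable_cst.
by rewrite (_ : Dv v _ = fun=> 0); [exact: IH|apply/funext => y; exact: derive_cst].
Qed.

Lemma Ck_id k V : Ck k V id.
Proof.
case: k => [|k] /=; first by move=> *; exact: ex_diff.
split=> [*|v]; first exact: ex_diff.
by rewrite (_ : Dv v _ = fun=> v); [exact: Ck_cst|apply/funext => y; exact: derive_id].
Qed.

Lemma CkD {W : normedModType R} {k V} {f g : 'rV[R]_m -> W} :
  open V -> Ck k V f -> Ck k V g -> Ck k V (f + g).
Proof.
move=> oV; elim: k f g => [|k IH] f g /=.
  by move=> df dg x Vx; exact: differentiableD (df x Vx) (dg x Vx).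
move=> [df dfk] [dg dgk]; split=> [x Vx|v]; first exact: differentiableD (df x Vx) (dg x Vx).
apply: Ck_eq_on oV _ (IH _ _ (dfk v) (dgk v)) => x Vx.
by rewrite /Dv deriveD //; apply: diff_derivable; [exact: df|exact: dg].
Qed.

Lemma CkM {k V} {f g : 'rV[R]_m -> R} :
  open V -> Ck k V f -> Ck k V g -> Ck k V (f * g).
Proof.
move=> oV; elim: k f g => [|k IH] f g /=.
  by move=> df dg x Vx; exact: differentiableM (df x Vx) (dg x Vx).
move=> [df dfk] [dg dgk]; split=> [x Vx|v]; first exact: differentiableM (df x Vx) (dg x Vx).
have fk : Ck k V f by apply: CkS; split.
have gk : Ck k V g by apply: CkS; split.
apply: Ck_eq_on oV _ (CkD oV (IH _ _ fk (dgk v)) (IH _ _ gk (dfk v))) => x Vx.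
by rewrite /Dv deriveM //; apply: diff_derivable; [exact: df|exact: dg].
Qed.

Lemma Ck_sum {W : normedModType R} k V n (F : 'I_n -> 'rV[R]_m -> W) :
  open V -> (forall i, Ck k V (F i)) -> Ck k V (\sum_(i < n) F i).
Proof.
move=> oV; elim: n F => [|n IH] F Fk; first by rewrite big_ord0; exact: Ck_cst.
by rewrite big_ord_recr; apply: CkD => //; apply: IH.
Qed.

Lemma derive_coord {n} (g : 'rV[R]_m -> 'rV[R]_n) j x v :
  differentiable g x -> 'D_v (fun y => g y 0 j) x = 'D_v g x 0 j.
Proof. by move=> dg; rewrite derive_mx ?mxE //; exact: diff_derivable. Qed.

Lemma Ck_coord {n k V} {g : 'rV[R]_m -> 'rV[R]_n} j :
  open V -> Ck k V g -> Ck k V (fun y => g y 0 j).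
Proof.
move=> oV; elim: k g => [|k IH] g /=.
  by move=> dg x Vx; exact: differentiable_comp (dg x Vx) (differentiable_coord _ 0 j).
move=> [dg dgk]; split=> [x Vx|v].
  exact: differentiable_comp (dg x Vx) (differentiable_coord _ 0 j).
by apply: Ck_eq_on oV _ (IH _ (dgk v)) => x Vx; rewrite /Dv derive_coord //; exact: dg.
Qed.

Lemma differentiable_row {n} (g : 'rV[R]_m -> 'rV[R]_n) x :
  (forall j, differentiable (fun y => g y 0 j) x) -> differentiable g x.
Proof.
move=> dg; have -> : g = \sum_(j < n) (fun y => g y 0 j *: delta_mx 0 j).
  by apply/funext => y; rewrite fct_sumE; exact: row_sum_delta.
by apply: differentiable_sum => j; exact: differentiableZl.
Qed.

Lemma Ck_row {n} k V (g : 'rV[R]_m -> 'rV[R]_n) :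
  open V -> (forall j, Ck k V (fun y => g y 0 j)) -> Ck k V g.
Proof.
move=> oV; elim: k g => [|k IH] g gk.
  by move=> x Vx; apply: differentiable_row => j; exact: gk.
have dg x : V x -> differentiable g x.
  by move=> Vx; apply: differentiable_row => j; exact: (gk j).1.
split=> // v; apply: IH => j.
by apply: Ck_eq_on oV _ ((gk j).2 v) => x Vx; rewrite /Dv derive_coord //; exact: dg.
Qed.
End Ck.

Lemma derive_sum_delta {n} {W : normedModType R} (f : 'rV[R]_n -> W) y u :
  differentiable f y -> 'D_u f y = \sum_(j < n) u 0 j *: 'D_(delta_mx 0 j) f y.
Proof.
move=> df; rewrite deriveE // {1}(row_sum_delta u) linear_sum.
by apply: eq_bigr => j _; rewrite linearZ /= deriveE.
Qed.

Lemma derive_comp {m n} {W : normedModType R} (f : 'rV[R]_n -> W)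
    (g : 'rV[R]_m -> 'rV[R]_n) x v :
  differentiable g x -> differentiable f (g x) -> 'D_v (f \o g) x = 'D_('D_v g x) f (g x).
Proof.
move=> dg df; rewrite deriveE; last exact: differentiable_comp.
by rewrite diff_comp //= !deriveE.
Qed.

Lemma Ck_comp {m n k} {U : set 'rV[R]_n} {V : set 'rV[R]_m}
    {f : 'rV[R]_n -> R} {g : 'rV[R]_m -> 'rV[R]_n} :
  open V -> (forall x, V x -> U (g x)) -> Ck k U f -> Ck k V g -> Ck k V (f \o g).
Proof.
move=> oV gVU; elim: k f g gVU => [|k IH] f g gVU.
  by move=> df dg x Vx; exact: differentiable_comp (dg x Vx) (df _ (gVU _ Vx)).
move=> [df dfk] [dg dgk]; split=> [x Vx|v].
  exact: differentiable_comp (dg x Vx) (df _ (gVU _ Vx)).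
have gk : Ck k V g by apply: CkS; split.
have chain : Ck k V (\sum_(j < n) (fun x => Dv v g x 0 j * (Dv (delta_mx 0 j) f \o g) x)).
  apply: Ck_sum => // j.
  exact: CkM oV (Ck_coord _ oV (dgk v)) (IH _ _ gVU (dfk _) gk).
apply: Ck_eq_on oV _ chain => x Vx; have dfg := df _ (gVU _ Vx).
by rewrite fct_sumE /Dv (derive_comp f g) ?(derive_sum_delta f) //; exact: dg.
Qed.

Lemma Ck_comp_row {m n p k} {U : set 'rV[R]_n} {V : set 'rV[R]_m}
    {f : 'rV[R]_n -> 'rV[R]_p} {g : 'rV[R]_m -> 'rV[R]_n} :
  open V -> open U -> (forall x, V x -> U (g x)) -> Ck k U f -> Ck k V g -> Ck k V (f \o g).
Proof.
move=> oV oU gVU fk gk; apply: Ck_row => // j.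
exact: (Ck_comp (f := fun y => f y 0 j)) oV gVU (Ck_coord j oU fk) gk.
Qed.

Section SmoothOn.
Context {m : nat}.
Implicit Types (V : set 'rV[R]_m).

Lemma smooth_on_sub {W : normedModType R} V V' (f : 'rV[R]_m -> W) :
  V' `<=` V -> smooth_on V f -> smooth_on V' f.
Proof. by move=> V'V fs vs x /V'V; exact: fs. Qed.

Lemma smooth_on_differentiable {W : normedModType R} {V} {f : 'rV[R]_m -> W} {x} :
  smooth_on V f -> V x -> differentiable f x.
Proof. by move=> fs; exact: (fs [::]). Qed.

Lemma smooth_on_cst {W : normedModType R} V (c : W) : smooth_on V (fun=> c).
Proof. by apply/smooth_onP => k; exact: Ck_cst. Qed.

Lemma smooth_on_id V : smooth_on V id.
Proof. by apply/smooth_onP => k; exact: Ck_id. Qed.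

Lemma smooth_onD {W : normedModType R} V (f g : 'rV[R]_m -> W) :
  open V -> smooth_on V f -> smooth_on V g -> smooth_on V (f + g).
Proof.
move=> oV /smooth_onP fk /smooth_onP gk.
by apply/smooth_onP => k; exact: CkD oV (fk k) (gk k).
Qed.

Lemma smooth_on_coord {n V} {g : 'rV[R]_m -> 'rV[R]_n} j :
  open V -> smooth_on V g -> smooth_on V (fun y => g y 0 j).
Proof. by move=> oV /smooth_onP gk; apply/smooth_onP => k; exact: Ck_coord j oV (gk k). Qed.

Lemma smooth_on_comp {n} {U : set 'rV[R]_n} {V} {f : 'rV[R]_n -> R}
    {g : 'rV[R]_m -> 'rV[R]_n} :
  open V -> (forall x, V x -> U (g x)) -> smooth_on U f -> smooth_on V g ->
  smooth_on V (f \o g).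
Proof.
move=> oV gVU /smooth_onP fk /smooth_onP gk.
by apply/smooth_onP => k; exact: Ck_comp oV gVU (fk k) (gk k).
Qed.

Lemma smooth_on_comp_row {n p} {U : set 'rV[R]_n} {V} {f : 'rV[R]_n -> 'rV[R]_p}
    {g : 'rV[R]_m -> 'rV[R]_n} :
  open V -> open U -> (forall x, V x -> U (g x)) -> smooth_on U f -> smooth_on V g ->
  smooth_on V (f \o g).
Proof.
move=> oV oU gVU /smooth_onP fk /smooth_onP gk.
by apply/smooth_onP => k; exact: Ck_comp_row oV oU gVU (fk k) (gk k).
Qed.
End SmoothOn.

Lemma smooth_on_derive_comp {m n p} {U : set 'rV[R]_n} (V : set 'rV[R]_m)
    (h : 'rV[R]_n -> 'rV[R]_p) (c b : 'rV[R]_m -> 'rV[R]_n) :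
  open V -> open U -> (forall w, V w -> U (c w)) ->
  smooth_on U h -> smooth_on V c -> smooth_on V b ->
  smooth_on V (fun w => 'D_(b w) h (c w)).
Proof.
move=> oV oU cVU hs /smooth_onP ck /smooth_onP bk; apply/smooth_onP => k.
apply: Ck_row => // i.
have Dhk j : Ck k U (Dv (delta_mx 0 j) h) by exact: ((smooth_onP _ _).1 hs k.+1).2.
have chain : Ck k V (\sum_(j < n)
    ((fun w => b w 0 j) * (fun w => (Dv (delta_mx 0 j) h \o c) w 0 i))).
  apply: Ck_sum => // j; apply: (CkM oV (Ck_coord j oV (bk k))).
  exact: Ck_coord i oV (Ck_comp_row oV oU cVU (Dhk j) (ck k)).
apply: Ck_eq_on oV _ chain => w Vw; rewrite fct_sumE.
rewrite (derive_sum_delta _ _ _ (smooth_on_differentiable hs (cVU w Vw))) summxE.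
by apply: eq_bigr => j _; rewrite mxE.
Qed.
End Smooth.

Section Translation.
Context {R : realType} {V : normedModType R}.

Lemma continuous_addr (c : V) : continuous (fun w => w + c).
Proof. by move=> w; apply: cvgD; [exact: cvg_id|exact: cvg_cst]. Qed.

Lemma open_translate {U : set V} (c : V) : open U -> open [set w | U (w + c)].
Proof. by move=> oU; apply: open_comp => // w _; exact: continuous_addr. Qed.

Lemma connected_translate (U : set V) (c : V) : connected U -> connected [set w | U (w + c)].
Proof.
move=> cU; have -> : [set w | U (w + c)] = (fun w => w - c) @` U.
  apply/seteqP; split => w /= => [Uw|[u Uu <-]]; last by rewrite subrK.
  by exists (w + c); rewrite ?addrK.
apply: connected_continuous_connected => //; apply: continuous_subspaceT.
exact: continuous_addr.
Qed.

Lemma derive_translate {W : normedModType R} (h : V -> W) (c a v : V) :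
  'D_v (fun u => h (u + c)) a = 'D_v h (a + c).
Proof. by rewrite /derive /=; under eq_fun do rewrite -addrA. Qed.
End Translation.

Lemma open_smooth_preimage {R : realType} {m n} (V : set 'rV[R]_m) (W : set 'rV[R]_n) c :
  open V -> open W -> smooth_on V c -> open (V `&` c @^-1` W).
Proof.
move=> oV oW cs; rewrite openE => x [Vx Wcx]; apply: filterI; first exact: open_nbhs_nbhs.
apply: (differentiable_continuous (smooth_on_differentiable cs Vx)).
exact: open_nbhs_nbhs.
Qed.

Section FinePlot.
Context {R : realType} {L : lmodType R} {n : nat}.
Implicit Types (U : set 'rV[R]_n) (Q : 'rV[R]_n -> L).

Lemma fine_plot_eq_on {U Q Q'} :
  fine_plot U Q -> (forall u, U u -> Q u = Q' u) -> fine_plot U Q'.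
Proof.
move=> fQ QQ' E hE; have [[_ [Eeq _]] _ _] := hE.
by apply: Eeq (fQ E hE) _ => u /set_mem; exact: QQ'.
Qed.

Lemma fine_plot_cst {U} (c : L) : open U -> fine_plot U (fun=> c).
Proof. by move=> oU E [[_ [_ [Ecst _]]] _ _]; exact: Ecst. Qed.

Lemma fine_plotD {U Q1 Q2} :
  fine_plot U Q1 -> fine_plot U Q2 -> fine_plot U (fun u => Q1 u + Q2 u).
Proof. by move=> fQ1 fQ2 E hE; have [_ ED _] := hE; exact: ED (fQ1 E hE) (fQ2 E hE). Qed.

Lemma fine_plotZ {U} {r : 'rV[R]_n -> R} {Q} :
  smooth_on U r -> fine_plot U Q -> fine_plot U (fun u => r u *: Q u).
Proof. by move=> rs fQ E hE; have [_ _ EZ] := hE; exact: EZ rs (fQ E hE). Qed.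

Lemma fine_plot_sum {U p} {F : 'I_p -> 'rV[R]_n -> L} :
  open U -> (forall i, fine_plot U (F i)) -> fine_plot U (fun u => \sum_(i < p) F i u).
Proof.
move=> oU; elim: p F => [|p IH] F fF.
  by under eq_fun do rewrite big_ord0; exact: fine_plot_cst.
under eq_fun do rewrite big_ord_recr /=.
by apply: fine_plotD => //; exact: IH.
Qed.

Lemma fine_plot_sheaf U Q : open U ->
  (forall u, U u -> exists W, [/\ open W, W u, W `<=` U & fine_plot W Q]) -> fine_plot U Q.
Proof.
move=> oU fQ E hE; have [[_ [_ [_ [_ Esheaf]]]] _ _] := hE.
apply: Esheaf => // u Uu; have [W [oW Wu WU fQW]] := fQ u Uu.
by exists W; split => //; exact: fQW.
Qed.
End FinePlot.

Lemma is_linear_map_row_sum {R : realType} {L : lmodType R} {n} (h : 'rV[R]_n -> L) v :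
  is_linear_map h -> h v = \sum_(i < n) v 0 i *: h (delta_mx 0 i).
Proof.
move=> hlin.
pose hL : {linear 'rV[R]_n -> L} := HB.pack h (GRing.isLinear.Build _ _ _ _ h hlin).
rewrite -[h]/(hL : _ -> _) {1}(row_sum_delta v) linear_sum.
by apply: eq_bigr => i _; rewrite linearZ.
Qed.

Section FibreComponent.
Context {R : realType} {X : Type} {T : X -> lmodType R}.

Lemma projT1_tadd (s t : tbundle T) : projT1 (tadd s t) = projT1 s.
Proof. by rewrite /tadd; case: pselect. Qed.

Lemma tadd_fibre y (a b : T y) : tadd (existT T y a) (existT T y b) = existT T y (a + b).
Proof. by rewrite /tadd; case: pselect => // e; rewrite (Prop_irrelevance e erefl). Qed.

Variable x : X.

(* Junk value 0 off the fibre over [x]. *)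
Definition fibre_component (s : tbundle T) : T x :=
  match pselect (projT1 s = x) with
  | left e => eq_rect _ T (projT2 s) _ e
  | right _ => 0
  end.

Lemma fibre_component_fibre t : fibre_component (existT T x t) = t.
Proof.
by rewrite /fibre_component; case: pselect => // e; rewrite (Prop_irrelevance e erefl).
Qed.

Lemma fibre_component_off y (t : T y) : y <> x -> fibre_component (existT T y t) = 0.
Proof. by rewrite /fibre_component; case: pselect. Qed.

Lemma fibre_component_tadd (s t : tbundle T) : projT1 s = x -> projT1 t = x ->
  fibre_component (tadd s t) = fibre_component s + fibre_component t.
Proof.
by case: s t => [y a] [z b] /= ? ?; subst y z; rewrite tadd_fibre !fibre_component_fibre.
Qed.

Lemma fibre_component_tscale r (s : tbundle T) :
  fibre_component (tscale r s) = r *: fibre_component s.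
Proof.
case: s => y a; have [yx|yx] := pselect (y = x).
  by subst y; rewrite !fibre_component_fibre.
by rewrite /tscale !fibre_component_off // scaler0.
Qed.

Lemma fibre_component_zero y : fibre_component (existT T y 0) = 0.
Proof.
have [yx|yx] := pselect (y = x); last exact: fibre_component_off.
by subst y; exact: fibre_component_fibre.
Qed.
End FibreComponent.

Section TangentDiffeology.
Context {R : realType} {X : Type} (D : pdiff R X) {T : X -> lmodType R}
  {iota : forall y : X, forall o : gobj R X, 'rV[R]_(gdim o) -> T y}.
Hypothesis hD : is_diffeology D.

Definition proj_plot : pdiff R (tbundle T) :=
  fun n U P => open U /\ D n U (fun u => projT1 (P u)).

Lemma is_diffeology_proj_plot : is_diffeology proj_plot.
Proof.
have [_ [Deq [Dcst [Dcomp Dsheaf]]]] := hD.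
split; first by move=> n U P [].
split; first by move=> n U P P' [oU DP] PP'; split => //; apply: Deq DP _ => u /PP' ->.
split; first by move=> n U c oU; split => //; exact: Dcst.
split.
  by move=> n m U V P f [oU DP] oV fs fVU; split => //; exact: Dcomp DP oV fs fVU.
move=> n U P oU Ploc; split => //; apply: Dsheaf => // u Uu.
by have [W [oW Wu WU [_ DW]]] := Ploc u Uu; exists W.
Qed.

Lemma is_dvs_over_proj_plot : is_dvs_over D proj_plot.
Proof.
split; first exact: is_diffeology_proj_plot.
- by move=> n U P [].
- by move=> n U P1 P2 [oU D1] _ _; split => //; under eq_fun do rewrite projT1_tadd.
- by move=> n U r P _ [].
- by move=> n U p Dp; split => //; exact: (hD.1 _ _ _ Dp).
Qed.

Lemma contains_hector_proj_plot : contains_hector D iota proj_plot.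
Proof.
have [_ [_ [_ [Dcomp _]]]] := hD.
by move=> n U f _ _ Df k V a b oV sa _ aVU; split => //; exact: Dcomp Df oV sa aVU.
Qed.

Lemma open_dvs_plot n (U : set 'rV[R]_n) P : dvs_plot D iota U P -> open U.
Proof. by move=> P_dvs; have [] := P_dvs _ is_dvs_over_proj_plot contains_hector_proj_plot. Qed.

Lemma is_vs_diffeology_tdvs_plot x : is_vs_diffeology (@tdvs_plot R X D T iota x).
Proof.
split; first (split; last split; last split; last split).
- by move=> n U Q; exact: open_dvs_plot.
- move=> n U Q Q' Q_dvs QQ' E Edvs Ehec; have [[_ [Eeq _]] _ _ _ _] := Edvs.
  by apply: Eeq (Q_dvs E Edvs Ehec) _ => u /QQ' /= ->.
- by move=> n U c oU E [[_ [_ [Ecst _]]] _ _ _ _] _; exact: Ecst.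
- move=> n m U V Q f Q_dvs oV fs fVU E Edvs Ehec.
  have [[_ [_ [_ [Ecomp _]]]] _ _ _ _] := Edvs.
  exact: Ecomp (Q_dvs E Edvs Ehec) oV fs fVU.
- move=> n U Q oU Qloc E Edvs Ehec; have [[_ [_ [_ [_ Esheaf]]]] _ _ _ _] := Edvs.
  apply: Esheaf => // u Uu; have [W [oW Wu WU Q_dvs]] := Qloc u Uu.
  by exists W; split => //; exact: Q_dvs.
- move=> n U Q1 Q2 Q1_dvs Q2_dvs E Edvs Ehec; have [[_ [Eeq _]] _ Etadd _ _] := Edvs.
  have := Etadd _ _ _ _ (Q1_dvs E Edvs Ehec) (Q2_dvs E Edvs Ehec) (fun _ _ => erefl).
  by move/Eeq; apply => u _ /=; rewrite tadd_fibre.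
- move=> n U r Q rs Q_dvs E Edvs Ehec; have [_ _ _ Etscale _] := Edvs.
  exact: Etscale rs (Q_dvs E Edvs Ehec).
Qed.

Lemma fine_plot_tdvs_plot x n (U : set 'rV[R]_n) Q :
  fine_plot U Q -> @tdvs_plot R X D T iota x n U Q.
Proof. by move=> fQ; exact: fQ _ (is_vs_diffeology_tdvs_plot x). Qed.
End TangentDiffeology.

Section FibrewiseFine.
Context {R : realType} {X : Type} (D : pdiff R X) {T : X -> lmodType R} (x : X).

Definition fine_over {n} (U : set 'rV[R]_n) (P : 'rV[R]_n -> tbundle T) : Prop :=
  forall m (V : set 'rV[R]_m) (g : 'rV[R]_m -> 'rV[R]_n), open V -> smooth_on V g ->
    (forall v, V v -> U (g v)) -> (forall v, V v -> projT1 (P (g v)) = x) ->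
    fine_plot V (fun v => fibre_component x (P (g v))).

Definition fibrewise_fine_plot : pdiff R (tbundle T) :=
  fun n U P => [/\ open U, D n U (fun u => projT1 (P u)) & fine_over U P].

Section FineOver.
Context {n : nat}.
Implicit Types (U : set 'rV[R]_n) (P : 'rV[R]_n -> tbundle T).

Lemma fine_over_eq_on {U P P'} : fine_over U P -> {in U, P =1 P'} -> fine_over U P'.
Proof.
move=> fP PP' m V g oV gs gVU gx.
have PP'g v : V v -> P (g v) = P' (g v) by move=> Vv; apply/PP'/mem_set/gVU.
apply: fine_plot_eq_on (fP m V g oV gs gVU _) _ => v Vv; first by rewrite PP'g ?gx.
by rewrite PP'g.
Qed.

Lemma fine_over_comp {k U} {V : set 'rV[R]_k} {P f} :
  fine_over U P -> open V -> smooth_on V f -> f @` V `<=` U -> fine_over V (P \o f).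
Proof.
move=> fP oV fs fVU m W g oW gs gWV gx; apply: fP gx => //.
- exact: smooth_on_comp_row oW oV gWV fs gs.
- by move=> w Ww; apply: fVU; exists (g w); last by []; exact: gWV.
Qed.

Lemma fine_over_sheaf U P :
  (forall u, U u -> exists W, [/\ open W, W u, W `<=` U & fine_over W P]) -> fine_over U P.
Proof.
move=> Ploc m V g oV gs gVU gx; apply: fine_plot_sheaf => // v Vv.
have [W [oW Wgv WU fPW]] := Ploc (g v) (gVU v Vv).
have oVW : open (V `&` g @^-1` W) by exact: open_smooth_preimage.
exists (V `&` g @^-1` W); split => //; apply: fPW => //.
- by apply: smooth_on_sub gs => w [].
- by move=> w [].
- by move=> w [Vw _]; exact: gx.
Qed.

Lemma fine_over_tadd U P1 P2 : fine_over U P1 -> fine_over U P2 ->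
  (forall u, U u -> projT1 (P1 u) = projT1 (P2 u)) ->
  fine_over U (fun u => tadd (P1 u) (P2 u)).
Proof.
move=> fP1 fP2 P12 m V g oV gs gVU gx.
have P1x v : V v -> projT1 (P1 (g v)) = x by move=> Vv; rewrite -(gx v Vv) projT1_tadd.
have P2x v : V v -> projT1 (P2 (g v)) = x.
  by move=> Vv; rewrite -P12; [exact: P1x|exact: gVU].
apply: fine_plot_eq_on (fine_plotD (fP1 _ _ _ oV gs gVU P1x) (fP2 _ _ _ oV gs gVU P2x)) _.
by move=> v Vv; rewrite fibre_component_tadd ?P1x ?P2x.
Qed.

Lemma fine_over_tscale U (r : 'rV[R]_n -> R) P : smooth_on U r -> fine_over U P ->
  fine_over U (fun u => tscale (r u) (P u)).
Proof.
move=> rs fP m V g oV gs gVU gx.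
apply: fine_plot_eq_on (fine_plotZ (smooth_on_comp oV gVU rs gs) (fP _ _ _ oV gs gVU gx)) _.
by move=> v _; rewrite fibre_component_tscale.
Qed.

Lemma fine_over_zero U (p : 'rV[R]_n -> X) : fine_over U (fun u => existT T (p u) 0).
Proof.
move=> m V g oV _ _ _; apply: fine_plot_eq_on (fine_plot_cst 0 oV) _.
by move=> v _; rewrite fibre_component_zero.
Qed.
End FineOver.

Hypothesis hD : is_diffeology D.

Lemma is_diffeology_fibrewise_fine_plot : is_diffeology fibrewise_fine_plot.
Proof.
have [_ [Deq [Dcst [Dcomp Dsheaf]]]] := hD.
split; first by move=> n U P [].
split.
  move=> n U P P' [oU DP fP] PP'; split => //; last exact: fine_over_eq_on fP PP'.
  by apply: Deq DP _ => u /PP' /= ->.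
split.
  move=> n U c oU; split => //; first exact: Dcst.
  by move=> m V g oV _ _ _; exact: fine_plot_cst.
split.
  move=> n m U V P f [oU DP fP] oV fs fVU; split => //; first exact: Dcomp DP oV fs fVU.
  exact: fine_over_comp fP oV fs fVU.
move=> n U P oU Ploc; split => //.
  apply: Dsheaf => // u Uu; have [W [oW Wu WU [_ DW _]]] := Ploc u Uu.
  by exists W.
apply: fine_over_sheaf => u Uu; have [W [oW Wu WU [_ _ fPW]]] := Ploc u Uu.
by exists W.
Qed.

Lemma is_dvs_over_fibrewise_fine_plot : is_dvs_over D fibrewise_fine_plot.
Proof.
split; first exact: is_diffeology_fibrewise_fine_plot.
- by move=> n U P [].
- move=> n U P1 P2 [oU DP1 fP1] [_ _ fP2] P12; split => //; last exact: fine_over_tadd.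
  by under eq_fun do rewrite projT1_tadd.
- by move=> n U r P rs [oU DP fP]; split => //; exact: fine_over_tscale.
- move=> n U p Dp; split => //; last exact: fine_over_zero.
  exact: (hD.1 _ _ _ Dp).
Qed.
End FibrewiseFine.

Lemma is_gobj_shift_obj {R : realType} {X : Type} {D : pdiff R X} {x n}
    {U : set 'rV[R]_n} {f u} :
  is_diffeology D -> open U -> connected U -> D n U f -> U u -> f u = x ->
  is_gobj D x (shift_obj U f u).
Proof.
move=> [_ [_ [_ [Dcomp _]]]] oU cU Df Uu fu; split => /=; rewrite ?add0r //.
- exact: open_translate.
- exact: connected_translate.
apply: (Dcomp _ _ _ _ _ (fun w => w + u) Df (open_translate u oU)).
  exact: smooth_onD (open_translate u oU) (smooth_on_id _) (smooth_on_cst _ _).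
by move=> _ [w Uw <-].
Qed.

Lemma is_ghom_shift_obj {R : realType} {X : Type} {n} {U : set 'rV[R]_n} {f : 'rV[R]_n -> X}
    {u0 u q W h} :
  is_ghom (shift_obj U f u0) q W h -> W (u - u0) -> h (u - u0) = 0 ->
  is_ghom (shift_obj U f u) q [set v | W (v + (u - u0))] (fun v => h (v + (u - u0))).
Proof.
move=> [oW [_ [WU [hs [_ [hWq hf]]]]]] Wc hc0.
have oWc : open [set v | W (v + (u - u0))] by exact: open_translate.
split => //=; split; first by rewrite add0r.
split; first by move=> v /WU /=; rewrite -addrA subrK.
split.
  apply: (smooth_on_comp_row (f := h) (g := fun v => v + (u - u0)) oWc oW) hs _ => //.
  exact: smooth_onD oWc (smooth_on_id _) (smooth_on_cst _ _).
split; first by rewrite add0r.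
split; first by move=> _ [v Wv <-]; apply: hWq; exists (v + (u - u0)).
by move=> v Wv; rewrite -hf //= -addrA subrK.
Qed.

Lemma gcocone_shift_obj {R : realType} {X : Type} {D : pdiff R X} {x} {L : lmodType R}
    {kappa : forall o : gobj R X, 'rV[R]_(gdim o) -> L} {n} {U : set 'rV[R]_n}
    {f u0 u q W h} v :
  is_gcocone D x kappa -> is_gobj D x (shift_obj U f u) -> is_gobj D x q ->
  is_ghom (shift_obj U f u0) q W h -> W (u - u0) -> h (u - u0) = 0 ->
  kappa (shift_obj U f u) v = kappa q ('D_v h (u - u0)).
Proof.
move=> [_ kappa_hom] pobj qobj hhom Wc hc0.
rewrite -(kappa_hom _ _ _ _ pobj qobj (is_ghom_shift_obj hhom Wc hc0)).
by rewrite derive_translate add0r.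
Qed.

Section GeneratingSet.
Context {R : realType} {X : Type} {D : pdiff R X} {x : X} {T : X -> lmodType R}
  {iota : forall y : X, forall o : gobj R X, 'rV[R]_(gdim o) -> T y} {G : set (gobj R X)}.
Hypothesis hD : is_diffeology D.
Hypothesis htan : forall y, is_internal_tangent D y (iota y).
Hypothesis hG : is_local_generating_set D x G.
Hypothesis hGlc : forall q : gobj R X, G q ->
  forall (m : nat) (V : set 'rV[R]_m) (f : 'rV[R]_m -> 'rV[R]_(gdim q)),
    open V -> smooth_on V f -> f @` V `<=` gdom q ->
    (forall v, V v -> gmap q (f v) = x) -> locally_constant_on V f.

Section Plot.
Context {n k : nat} {U : set 'rV[R]_n} {f : 'rV[R]_n -> X} {V : set 'rV[R]_k}
  {a : 'rV[R]_k -> 'rV[R]_n}.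
Hypotheses (oU : open U) (cU : connected U) (Df : D n U f) (oV : open V) (sa : smooth_on V a)
  (aVU : forall w, V w -> U (a w)) (fa : forall w, V w -> f (a w) = x).

Lemma generator_germ_vanishes w0 : V w0 -> exists q W h V',
  [/\ G q, is_ghom (shift_obj U f (a w0)) q W h, open V', V' w0 &
      forall w, V' w -> [/\ V w, W (a w - a w0) & h (a w - a w0) = 0]].
Proof.
move=> Vw0.
have [q [W [h [Gq hhom]]]] := hG.2 _ (is_gobj_shift_obj hD oU cU Df (aVU _ Vw0) (fa _ Vw0)).
have [oW [W0 [_ [hs [h0 [hWq hf]]]]]] := hhom.
pose c w := a w - a w0.
have cs : smooth_on V c by exact: smooth_onD oV sa (smooth_on_cst _ _).
have oVW : open (V `&` c @^-1` W) by exact: open_smooth_preimage.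
have hcs : smooth_on (V `&` c @^-1` W) (h \o c).
  apply: (smooth_on_comp_row (f := h) (g := c) oVW oW) hs _ => [w []//|].
  by apply: smooth_on_sub cs => w [].
have hc_lc : locally_constant_on (V `&` c @^-1` W) (h \o c).
  apply: hGlc Gq _ _ _ oVW hcs _ _ => [_ [w [_ Wcw] <-]|w [Vw Wcw]].
    by apply: hWq; exists (c w).
  by rewrite /= -hf //= /c subrK fa.
have Wc0 : W (c w0) by rewrite /c subrr.
have [V' [oV' V'w0 V'VW hcV']] := hc_lc w0 (conj Vw0 Wc0).
exists q, W, h, V'; split => // w V'w; have [Vw Wcw] := V'VW w V'w; split => //.
by have := hcV' w V'w; rewrite /= /c subrr h0.
Qed.

Lemma fine_plot_tangent_shift (b : 'rV[R]_k -> 'rV[R]_n) : smooth_on V b ->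
  fine_plot V (fun w => iota x (shift_obj U f (a w)) (b w)).
Proof.
move=> sb; apply: fine_plot_sheaf => // w0 Vw0.
have [q [W [h [V' [Gq hhom oV' V'w0 V'P]]]]] := generator_germ_vanishes w0 Vw0.
exists V'; split => //; first by move=> w /V'P [].
have [oW [_ [_ [hs _]]]] := hhom.
have [[iota_lin _] _] := htan x.
have qobj := hG.1 q Gq.
have V'V : V' `<=` V by move=> w /V'P [].
have coeff_s : smooth_on V' (fun w => 'D_(b w) h (a w - a w0)).
  apply: (smooth_on_derive_comp _ _ _ _ oV' oW _ hs).
  - by move=> w /V'P [].
  - exact: smooth_onD V' a (fun=> - a w0) oV' (smooth_on_sub _ _ _ V'V sa) (smooth_on_cst _ _).
  - exact: smooth_on_sub _ _ _ V'V sb.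
have coord_fine i :
    fine_plot V' (fun w => ('D_(b w) h (a w - a w0)) 0 i *: iota x q (delta_mx 0 i)).
  exact: fine_plotZ (smooth_on_coord i oV' coeff_s) (fine_plot_cst _ oV').
apply: fine_plot_eq_on (fine_plot_sum oV' coord_fine) _ => w V'w.
have [Vw Wc hc0] := V'P w V'w.
have pobj := is_gobj_shift_obj hD oU cU Df (aVU _ Vw) (fa _ Vw).
rewrite (gcocone_shift_obj _ (htan x).1 pobj qobj hhom Wc hc0).
by rewrite (is_linear_map_row_sum _ _ (iota_lin q qobj)).
Qed.
End Plot.

Lemma contains_hector_fibrewise_fine_plot : contains_hector D iota (fibrewise_fine_plot D x).
Proof.
have [_ [_ [_ [Dcomp _]]]] := hD.
move=> n U f oU cU Df k V a b oV sa sb aVU; split => //; first exact: Dcomp Df oV sa aVU.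
move=> m W g oW gs gWV gx.
have agWU w : W w -> U (a (g w)) by move=> Ww; apply: aVU; exists (g w) => //; exact: gWV.
apply: fine_plot_eq_on (fine_plot_tangent_shift oU cU Df oW
  (smooth_on_comp_row oW oV gWV sa gs) agWU gx _ (smooth_on_comp_row oW oV gWV sb gs)) _.
move=> w Ww; have fagx : f (a (g w)) = x by exact: gx.
by rewrite /tmap /= fagx fibre_component_fibre.
Qed.

Lemma tdvs_plot_fine n (U : set 'rV[R]_n) Q :
  @tdvs_plot R X D T iota x n U Q -> fine_plot U Q.
Proof.
move=> Q_dvs; have [oU _ fQ] := Q_dvs _ (is_dvs_over_fibrewise_fine_plot D x hD)
  contains_hector_fibrewise_fine_plot.
apply: fine_plot_eq_on (fQ _ U id oU (smooth_on_id _) (fun _ Uu => Uu) (fun _ _ => erefl)) _.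
by move=> u _; exact: fibre_component_fibre.
Qed.
End GeneratingSet.

Theorem proposition4p18 (R : realType) (X : Type) (D : pdiff R X) (x : X)
    (T : X -> lmodType R)
    (iota : forall y : X, forall o : gobj R X, 'rV[R]_(gdim o) -> T y) :
  is_diffeology D ->
  (forall y : X, is_internal_tangent D y (iota y)) ->
  (exists G : set (gobj R X),
     is_local_generating_set D x G /\
     forall q : gobj R X, G q ->
       forall (m : nat) (V : set 'rV[R]_m) (f : 'rV[R]_m -> 'rV[R]_(gdim q)),
         open V -> smooth_on V f -> f @` V `<=` gdom q ->
         (forall v, V v -> gmap q (f v) = x) ->
         locally_constant_on V f) ->
  is_fine (@tdvs_plot R X D T iota x).
Proof.
move=> hD htan [G [hG hGlc]] n U Q; split.
- exact: (tdvs_plot_fine hD htan hG hGlc).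
- exact: (fine_plot_tdvs_plot D hD).
Qed.
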